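(* Let $G$ be a finite group of even order and let $\mathcal{F}$ be a $1$-rotational $k$-factorization of $K_{\overline{G}}$. Then $k$ is even, and every involution of $G$ lies in the $G$-stabilizer of some factor $F\in\mathcal{F}$.
   Context: For a finite group $G$, $\overline{G}=G\cup\{\infty\}$, and $K_V$ denotes the complete graph on vertex set $V$. $G$ acts on $\overline{G}$ by right multiplication, with $\infty g=\infty$ for all $g\in G$; for a subgraph $F$ of $K_{\overline{G}}$ and $g\in G$, $Fg$ is the graph obtained by replacing every vertex $v$ by $vg$. A $k$-factor of $K_V$ is a spanning $k$-regular subgraph, and a $k$-factorization is a set of $k$-factors whose edge sets partition the edge set of $K_V$. A $k$-factorization $\mathcal{F}$ of $K_{\overline{G}}$ is $1$-rotational if $Fg\in\mathcal{F}$ for all $F\in\mathcal{F}$ and $g\in G$. The $G$-stabilizer of a factor $F$ is $\{g\in G: Fg=F\}$. An involution is an element of order $2$. *)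

From mathcomp Require Import all_boot all_fingroup.
Set Implicit Arguments. Unset Strict Implicit. Unset Printing Implicit Defensive.
Local Open Scope group_scope.

(* Vertex set of K_{overline G}: G ∪ {∞} is encoded as option gT, None = ∞. *)


Definition vact (gT : finGroupType) (v : option gT) (g : gT) : option gT :=
  match v with None => None | Some x => Some (x * g) end.

(* A (spanning) subgraph of K_V is given by its edge set: a set of 2-subsets of V. *)
Definition is_edge (gT : finGroupType) (e : {set option gT}) : bool := #|e| == 2.

Definition deg (gT : finGroupType) (F : {set {set option gT}}) (v : option gT) : nat :=
  #|[set e in F | v \in e]|.

Definition is_kfactor (gT : finGroupType) (k : nat) (F : {set {set option gT}}) : Prop :=
  (forall e, e \in F -> is_edge e) /\ (forall v, deg F v = k).

Definition is_kfactorization (gT : finGroupType) (k : nat)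
    (FF : {set {set {set option gT}}}) : Prop :=
  (forall F, F \in FF -> is_kfactor k F) /\
  (forall e : {set option gT}, is_edge e ->
     exists! F, F \in FF /\ e \in F).

Definition gtrans (gT : finGroupType) (F : {set {set option gT}}) (g : gT)
  : {set {set option gT}} :=
  [set [set vact v g | v in e] | e : {set option gT} in F].

Definition one_rotational (gT : finGroupType) (FF : {set {set {set option gT}}}) : Prop :=
  forall F g, F \in FF -> gtrans F g \in FF.

Definition Gstab (gT : finGroupType) (F : {set {set option gT}}) : {set gT} :=
  [set g : gT | gtrans F g == F].

From mathcomp Require Import all_boot all_fingroup.

Set Implicit Arguments.
Unset Strict Implicit.
Unset Printing Implicit Defensive.

(* Counting incidences shows k (|G| + 1) = 2 |F| for any k-factor F, and
   |G| + 1 is odd, so k is even.  An involution x maps the edge {1, x} onto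
   itself; since the translate Fx of the factor F containing {1, x} is again a
   factor and contains that edge, Fx = F by uniqueness. *)

Lemma sum_deg (gT : finGroupType) (F : {set {set option gT}}) :
  (forall e, e \in F -> is_edge e) ->
  \sum_(v : option gT) deg F v = 2 * #|F|.
Proof.
move=> edgeF; rewrite /deg.
transitivity (\sum_(v : option gT) \sum_(e in F) (v \in e : nat)).
  apply: eq_bigr => v _; rewrite -sum1_card big_mkcond [RHS]big_mkcond /=.
  by apply: eq_bigr => e _; rewrite inE; case: (e \in F); case: (v \in e).
rewrite exchange_big /= -[#|F|]sum1_card big_distrr /=.
apply: eq_bigr => e eF; move/eqP: (edgeF e eF) => <-.
rewrite muln1 -sum1_card [RHS]big_mkcond /=.
by apply: eq_bigr => v _; case: (v \in e).
Qed.

Lemma kfactor_card (gT : finGroupType) (k : nat) (F : {set {set option gT}}) :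
  is_kfactor k F -> k * #|gT|.+1 = 2 * #|F|.
Proof.
case=> edgeF degF; rewrite -(sum_deg edgeF) -card_option mulnC -sum_nat_const.
by apply: eq_bigr => v _; rewrite degF.
Qed.

Local Open Scope group_scope.

Lemma mem_Gstab_translate_edge (gT : finGroupType) (k : nat) (FF : {set {set {set option gT}}})
    (F : {set {set option gT}}) (e : {set option gT}) (g : gT) :
  is_kfactorization k FF -> one_rotational FF -> F \in FF ->
  e \in F -> [set vact v g | v in e] \in F -> g \in Gstab F.
Proof.
move=> [factorFF uniqFF] rotFF FF_F eF egF.
have [edgeF _] := factorFF F FF_F.
have [F' [_ uniqF']] := uniqFF _ (edgeF _ egF).
have F'F := uniqF' F (conj FF_F egF).
have FgF' : gtrans F g \in FF /\ [set vact v g | v in e] \in gtrans F g.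
  by split; [exact: rotFF | exact: imset_f].
by rewrite inE -(uniqF' _ FgF') F'F.
Qed.

Lemma vact_involution_edge (gT : finGroupType) (x : gT) :
  x * x = 1 -> [set vact v x | v in [set Some 1; Some x]] = [set Some 1; Some x].
Proof. by move=> xx; rewrite imsetU1 imset_set1 /= mul1g xx setUC. Qed.

Theorem lemma2p4 (gT : finGroupType) (k : nat) (FF : {set {set {set option gT}}}) :
  ~~ odd #|[set: gT]| ->
  is_kfactorization k FF -> one_rotational FF ->
  ~~ odd k /\
  (forall x : gT, #[x]%g = 2 -> exists2 F, F \in FF & x \in Gstab F).
Proof.
rewrite cardsT => evenG factFF rotFF; have [factorFF uniqFF] := factFF.
split.
  have [F [[FF_F _] _]] := uniqFF [set None; Some 1] (introT eqP (cards2 _ _)).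
  move: (congr1 odd (kfactor_card (factorFF F FF_F))).
  by rewrite !oddM /= (negbTE evenG) andbT => ->.
move=> x ox.
have x_neq1 : x != 1 by apply: contra_eqN ox => /eqP ->; rewrite order1.
have xx : x * x = 1 by rewrite -expg2 -ox expg_order.
have edge1x : is_edge [set Some 1; Some x].
  by rewrite /is_edge cards2 (inj_eq Some_inj) [1 == x]eq_sym x_neq1.
have [F [[FF_F eF] _]] := uniqFF _ edge1x.
exists F => //; apply: (mem_Gstab_translate_edge factFF rotFF FF_F eF).
by rewrite vact_involution_edge.
Qed.
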